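(* Let $(\Omega,\mathcal H,\mathbb E)$ be a sublinear expectation space with $\mathbb E[\cdot]=\sup_{\theta\in\Theta}E_{P_\theta}[\cdot]$, where $\{P_\theta\}_{\theta\in\Theta}$ is a countably-dimensional weakly compact family of probability measures on $(\Omega,\sigma(\mathcal H))$. Let $X_1,X_2,\dots$ be a discrete IID source sequence on this space with values in a finite alphabet $\mathcal X$, let $p_\theta(x)=P_\theta(X_1=x)$, and let $d:\mathcal X\times\hat{\mathcal X}\to[0,\infty)$ be a distortion measure with $\hat{\mathcal X}$ finite. Then for any $D$, any $R_s>\hat R^I(D)$ and any $\epsilon>0$ there exist a sufficiently large $n$ and a $(\|\mathcal W\|,n,f_n,g_n)$ nonlinear source code with coding rate $R_s$ such that, with $\boldsymbol Q$ the corresponding transition probability matrix from $\mathcal X^n$ to $\hat{\mathcal X}^n$ (namely $\hat{\boldsymbol X}^n=g_n(f_n(\boldsymbol X^n))$), $$\mathcal E_{\boldsymbol Q}\big[d(\boldsymbol X^n,\hat{\boldsymbol X}^n)\big]=\inf_{\theta\in\Theta}E_{P_\theta}\big[d(\boldsymbol X^n,g_n(f_n(\boldsymbol X^n)))\big]\le D+\epsilon.$$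
   Context: Sublinear expectation space: $\mathcal H$ a linear space of real functions on $\Omega$ (containing constants, closed under $|\cdot|$ and bounded Borel functions of finitely many elements), $\mathbb E$ monotone, constant preserving, subadditive, positively homogeneous. Countably-dimensional weakly compact: for any bounded $Y_1,Y_2,\dots\in\mathcal H$ and any sequence $\{P_n\}\subset\{P_\theta\}$ there are a subsequence $\{n_k\}$ and $P\in\{P_\theta\}$ with $\lim_kP_{n_k}(\phi(Y_1,\dots,Y_d))=P(\phi(Y_1,\dots,Y_d))$ for every $d$ and bounded continuous $\phi$. IID: $\mathbb E[\phi(X_i)]=\mathbb E[\phi(X_j)]$ for all $i,j$ and bounded Borel $\phi$, and $\mathbb E[\phi(X_1,\dots,X_n)]=\mathbb E\big[\mathbb E[\phi(\boldsymbol x,X_n)]_{\boldsymbol x=(X_1,\dots,X_{n-1})}\big]$ for all $n$ and bounded Borel $\phi$. Code: $f_n:\mathcal X^n\to\mathcal W$, $g_n:\mathcal W\to\hat{\mathcal X}^n$, rate $\frac{\log\|\mathcal W\|}{n}$. Sequence distortion $d(\boldsymbol x^n,\hat{\boldsymbol x}^n)=\frac1n\sum_{i=1}^n d(x_i,\hat x_i)$. Rate distortion function: for a transition matrix $\boldsymbol Q=(q(\hat x|x))$ from $\mathcal X$ to $\hat{\mathcal X}$ put $\mathbb E_{\boldsymbol Q}[d(X,\hat X)]=\sup_\theta\sum_{x,\hat x}p_\theta(x)q(\hat x|x)d(x,\hat x)$ and $\overline I[\{p_\theta\};\boldsymbol Q]=\sup_\theta\sum_{x,\hat x}p_\theta(x)q(\hat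 x|x)\log\frac{q(\hat x|x)}{\sum_{x'}q(\hat x|x')p_\theta(x')}$; then $\hat R^I(D)=\inf\{\overline I[\{p_\theta\};\boldsymbol Q]:\mathbb E_{\boldsymbol Q}[d(X,\hat X)]\le D\}$. *)

From HB Require Import structures.
From mathcomp Require Import all_boot all_order all_algebra.
From mathcomp Require Import all_classical all_reals all_analysis.
Set Implicit Arguments. Unset Strict Implicit. Unset Printing Implicit Defensive.
Import Order.TTheory GRing.Theory Num.Theory.
Import numFieldNormedType.Exports.
Local Open Scope classical_set_scope.
Local Open Scope ring_scope.

Section SublinearSource.
Variables (R : realType) (dd : measure_display) (Omega : measurableType dd)
  (Theta : Type) (P : Theta -> probability Omega R).

Definition Eth (th : Theta) (f : Omega -> R) : \bar R := (\int[P th]_w (f w)%:E)%E.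
Definition sE (f : Omega -> R) : \bar R := ereal_sup [set Eth th f | th in [set: Theta]].
Definition lE (f : Omega -> R) : \bar R := ereal_inf [set Eth th f | th in [set: Theta]].

Variables (TX : finType) (X : nat -> Omega -> TX).

(* X^n = (X_0, ..., X_{n-1})  (0-indexed version of X_1..X_n) *)
Definition Xvec (n : nat) (w : Omega) : n.-tuple TX := [tuple X i w | i < n].

(* H = bounded Borel functions of finitely many X_i *)
Definition in_HX (Y : Omega -> R) :=
  exists m (psi : m.-tuple TX -> R), Y = (fun w => psi (Xvec m w)).

(* countably-dimensional weak compactness of {P_theta} (w.r.t. H) *)
Definition weakly_compact :=
  forall Y : nat -> Omega -> R, (forall k, in_HX (Y k)) ->
  forall s : nat -> Theta, exists (nk : nat -> nat) (th : Theta),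
    {homo nk : a b / (a < b)%N} /\
    forall (m : nat) (phi : 'rV[R]_m -> R),
      continuous phi -> (exists M : R, forall v, `|phi v| <= M) ->
      fine (Eth (s (nk k)) (fun w => phi (\row_(i < m) Y i w))) @[k --> \oo]
        --> fine (Eth th (fun w => phi (\row_(i < m) Y i w))).

Definition iid_seq :=
  (forall (i j : nat) (phi : TX -> R),
      sE (fun w => phi (X i w)) = sE (fun w => phi (X j w))) /\
  (forall (n : nat) (phi : n.-tuple TX -> TX -> R),
      sE (fun w => phi (Xvec n w) (X n w)) =
      sE (fun w => fine (sE (fun w' => phi (Xvec n w) (X n w'))))).

Variables (TXh : finType) (d : TX -> TXh -> R).

Definition pth (th : Theta) (x : TX) : R := fine (P th (X 0 @^-1` [set x])).

Definition is_transition (Q : TX -> TXh -> R) :=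
  (forall x y, 0 <= Q x y) /\ (forall x, \sum_y Q x y = 1).

Definition EQd (Q : TX -> TXh -> R) : \bar R :=
  ereal_sup [set (\sum_x \sum_y pth th x * Q x y * d x y)%:E | th in [set: Theta]].

Definition Ibar (Q : TX -> TXh -> R) : \bar R :=
  ereal_sup [set (\sum_x \sum_y pth th x * Q x y *
                   ln (Q x y / \sum_x' Q x' y * pth th x'))%:E | th in [set: Theta]].

Definition RI (D : R) : \bar R :=
  ereal_inf [set Ibar Q | Q in [set Q | is_transition Q /\ (EQd Q <= D%:E)%E]].

Definition dn (n : nat) (x : n.-tuple TX) (xh : n.-tuple TXh) : R :=
  n%:R^-1 * \sum_(i < n) d (tnth x i) (tnth xh i).

End SublinearSource.

From HB Require Import structures.
From mathcomp Require Import all_boot all_order all_algebra.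
From mathcomp Require Import all_classical all_reals all_analysis.
From mathcomp Require Import ring lra.
Import Order.TTheory GRing.Theory Num.Theory.
Set Implicit Arguments. Unset Strict Implicit. Unset Printing Implicit Defensive.
Local Open Scope ring_scope.

(* Fix th0 and the letter law p = p_th0.  Peeling off the last coordinate with
   the IID identity shows that the sublinear expectation of any function of
   X^n dominates its average under the product law p^n, so the lower
   expectation inf_th E_th is dominated by that average: it suffices to find a
   code whose p^n-average distortion is at most D + eps.  This is Shannon's
   random coding argument for a test channel Q with I(p; Q) < Rs and
   E_{p,Q} d <= D, which exists since R^I(D) < Rs.  Draw e^{n Rs} codewords
   i.i.d. from the output law q^n and encode by minimum distortion.  On pairs
   jointly typical with slack de > 0, q^n(y) >= e^{-n (I + de)} Q^n(y | x), so a
   source word is left uncovered with probability at most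
   2 P(atypical | x) + exp(-e^{n de} / 2), and Chebyshev's inequality makes
   atypicality O(1/n). *)

(** * Product laws on words *)

Section ProductWeight.
Variables (R : realType) (S : finType).

Definition prodw (r : S -> R) {n} (z : {ffun 'I_n -> S}) : R := \prod_i r (z i).

Lemma sum_prodwM (r : S -> R) n (phi : 'I_n -> S -> R) :
  \sum_z prodw r z * \prod_i phi i (z i) = \prod_i \sum_s r s * phi i s.
Proof. by rewrite bigA_distr_bigA; apply: eq_bigr => z _; rewrite -big_split. Qed.

Variable r : S -> R.
Hypotheses (r_ge0 : forall s, 0 <= r s) (sum_r : \sum_s r s = 1).

Lemma prodw_ge0 {n} (z : {ffun 'I_n -> S}) : 0 <= prodw r z.
Proof. by apply: prodr_ge0 => i _. Qed.

Lemma sum_prodw n : \sum_(z : {ffun 'I_n -> S}) prodw r z = 1.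
Proof. by rewrite /prodw -(bigA_distr_bigA (fun (_ : 'I_n) s => r s)); apply: big1. Qed.

Lemma sum_prodw_pair n (i j : 'I_n) (g h : S -> R) :
  \sum_z prodw r z * (g (z i) * h (z j)) =
  if i == j then \sum_s r s * (g s * h s)
  else (\sum_s r s * g s) * (\sum_s r s * h s).
Proof.
pose phi m s := (if m == i then g s else 1) * (if m == j then h s else 1).
have sum_phi1 m : m != i -> m != j -> \sum_s r s * phi m s = 1.
  by move=> /negPf mi /negPf mj; rewrite /phi mi mj; under eq_bigr do rewrite !mulr1.
transitivity (\prod_m \sum_s r s * phi m s).
  rewrite -sum_prodwM; apply: eq_bigr => z _.
  by rewrite /phi big_split /= -!big_mkcond !big_pred1_eq.
case: eqVneq => [ij|ij]; first subst j.
  rewrite (bigD1 i) //= [X in _ * X]big1 ?mulr1 => [|m mi]; last exact: sum_phi1.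
  by apply: eq_bigr => s _; rewrite /phi eqxx.
have ji : j != i by rewrite eq_sym.
rewrite (bigD1 i) // (bigD1 j) //= [X in _ * (_ * X)]big1 ?mulr1 => [|m /andP[mj mi]];
  last exact: sum_phi1.
rewrite /phi !eqxx (negPf ij) (negPf ji).
by congr (_ * _); apply: eq_bigr => s _; rewrite ?mulr1 ?mul1r.
Qed.

Variable Z : S -> R.
Let mu := \sum_s r s * Z s.
Let var := \sum_s r s * (Z s - mu) ^+ 2.

Lemma sum_prodw_sqr_centered n :
  \sum_(z : {ffun 'I_n -> S}) prodw r z * (\sum_i (Z (z i) - mu)) ^+ 2 = n%:R * var.
Proof.
have centered : \sum_s r s * (Z s - mu) = 0.
  by under eq_bigr do rewrite mulrBr; rewrite sumrB -mulr_suml sum_r mul1r subrr.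
transitivity (\sum_(i < n) \sum_(j < n) \sum_z
    prodw r z * ((Z (z i) - mu) * (Z (z j) - mu))).
  transitivity (\sum_z \sum_(i < n) \sum_(j < n)
      prodw r z * ((Z (z i) - mu) * (Z (z j) - mu))).
    apply: eq_bigr => z _; rewrite expr2 mulr_suml mulr_sumr.
    by apply: eq_bigr => i _; rewrite mulr_sumr mulr_sumr.
  by rewrite exchange_big; apply: eq_bigr => i _ /=; rewrite exchange_big.
rewrite mulr_natl -[n in RHS]card_ord -sumr_const; apply: eq_bigr => i _.
under eq_bigr => j _ do rewrite (sum_prodw_pair i j (fun s => Z s - mu) (fun s => Z s - mu)).
rewrite (bigD1 i) //= eqxx [X in _ + X]big1 ?addr0 => [|j]; last first.
  by rewrite eq_sym => /negPf ->; rewrite centered mul0r.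
by apply: eq_bigr => s _; rewrite expr2.
Qed.

Lemma chebyshev_prodw n (de : R) : (0 < n)%N -> 0 < de ->
  \sum_(z : {ffun 'I_n -> S})
     prodw r z * (if n%:R * de < `|\sum_i Z (z i) - n%:R * mu| then 1 else 0)
  <= var / (n%:R * de ^+ 2).
Proof.
move=> n_gt0 de_gt0.
have nde_gt0 : 0 < n%:R * de by rewrite mulr_gt0 // ltr0n.
have -> : var / (n%:R * de ^+ 2) = n%:R * var / (n%:R * de) ^+ 2.
  by field; rewrite pnatr_eq0 -lt0n n_gt0 gt_eqF.
rewrite -sum_prodw_sqr_centered mulr_suml; apply: ler_sum => z _.
rewrite -mulrA ler_wpM2l ?prodw_ge0 //.
rewrite sumrB sumr_const card_ord -[mu *+ n]mulr_natl.
case: ltrP => /= dev; last by rewrite divr_ge0 ?sqr_ge0.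
rewrite ler_pdivlMr ?exprn_gt0 // mul1r -[X in _ <= X]real_normK ?num_real //.
by rewrite ler_sqr ?nnegrE // ltW.
Qed.

End ProductWeight.

Lemma exists_le_avg (R : realType) (I : finType) (w F : I -> R) :
  (forall i, 0 <= w i) -> \sum_i w i = 1 -> exists i, F i <= \sum_i w i * F i.
Proof.
move=> w_ge0 sum_w; have [i0 _|I0] := pickP (@predT I); last first.
  by move: sum_w; rewrite big_pred0 // => /esym/eqP; rewrite oner_eq0.
exists (Order.arg_min i0 xpredT F).
case: (Order.TotalTheory.arg_minP F (isT : xpredT i0)) => i _ i_min.
rewrite -[F i]mul1r -sum_w mulr_suml; apply: ler_sum => j _.
by rewrite ler_wpM2l ?i_min.
Qed.

(** * Random coding for a fixed test channel *)

Lemma subr_le_mul_ln (R : realType) (a b : R) :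
  0 < a -> 0 < b -> a - b <= a * ln (a / b).
Proof.
move=> a_gt0 b_gt0.
have ba_gt0 : 0 < b / a by rewrite divr_gt0.
have ln_le : ln (b / a) <= b / a - 1.
  by have := @le_ln1Dx R (b / a - 1); rewrite addrCA subrr addr0; apply; lra.
rewrite -invf_div lnV ?posrE ?divr_gt0 //.
have := ler_wpM2l (ltW a_gt0) ln_le.
by rewrite mulrBr mulr1 mulrCA mulfV ?gt_eqF // mulr1 mulrN; lra.
Qed.

Section TestChannel.
Variables (R : realType) (TX TXh : finType).
Variables (p : TX -> R) (Q : TX -> TXh -> R) (d : TX -> TXh -> R).
Hypotheses (p_ge0 : forall x, 0 <= p x) (sum_p : \sum_x p x = 1).
Hypotheses (Q_ge0 : forall x y, 0 <= Q x y) (sum_Q : forall x, \sum_y Q x y = 1).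
Hypothesis d_ge0 : forall x y, 0 <= d x y.

Definition out_law y := \sum_x Q x y * p x.
Definition info_dens x y := ln (Q x y / out_law y).
Definition mutual_info := \sum_x \sum_y p x * Q x y * info_dens x y.
Definition mean_dist := \sum_x \sum_y p x * Q x y * d x y.
Definition dist_total := \sum_x \sum_y d x y.

Definition joint_law (s : TX * TXh) := p s.1 * Q s.1 s.2.
Definition dist_var := \sum_s joint_law s * (d s.1 s.2 - mean_dist) ^+ 2.
Definition info_var := \sum_s joint_law s * (info_dens s.1 s.2 - mutual_info) ^+ 2.

Lemma out_law_ge0 y : 0 <= out_law y.
Proof. by apply: sumr_ge0 => x _; rewrite mulr_ge0. Qed.

Lemma sum_out_law : \sum_y out_law y = 1.
Proof.
rewrite /out_law exchange_big /= -sum_p; apply: eq_bigr => x _.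
by rewrite -mulr_suml sum_Q mul1r.
Qed.

Lemma out_law_ge x y : Q x y * p x <= out_law y.
Proof.
rewrite /out_law (bigD1 x) //= lerDl.
by apply: sumr_ge0 => x' _; rewrite mulr_ge0.
Qed.

Lemma dist_total_ge0 : 0 <= dist_total.
Proof. by apply: sumr_ge0 => x _; apply: sumr_ge0. Qed.

Lemma dist_le_total x y : d x y <= dist_total.
Proof.
rewrite /dist_total (bigD1 x) //= (bigD1 y) //= -addrA lerDl.
by rewrite addr_ge0 //; apply: sumr_ge0 => *; [|apply: sumr_ge0].
Qed.

Lemma mean_dist_ge0 : 0 <= mean_dist.
Proof. by apply: sumr_ge0 => x _; apply: sumr_ge0 => y _; rewrite !mulr_ge0. Qed.

Lemma mutual_info_ge0 : 0 <= mutual_info.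
Proof.
have gibbs x y : p x * Q x y - p x * out_law y <= p x * Q x y * info_dens x y.
  have [->|Qxy_gt0] := eqVneq (Q x y) 0.
    by rewrite !mulr0 mul0r sub0r oppr_le0 mulr_ge0 ?out_law_ge0.
  have [->|px_gt0] := eqVneq (p x) 0; first by rewrite !mul0r subrr.
  have Qxy_pos : 0 < Q x y by rewrite lt_def Qxy_gt0 Q_ge0.
  have px_pos : 0 < p x by rewrite lt_def px_gt0 p_ge0.
  have qy_pos : 0 < out_law y by apply: lt_le_trans (out_law_ge x y); rewrite mulr_gt0.
  by rewrite -mulrBr -mulrA ler_wpM2l ?subr_le_mul_ln.
apply: le_trans (ler_sum _ (fun x _ => ler_sum _ (fun y _ => gibbs x y))).
by rewrite big1 // => x _; rewrite sumrB -!mulr_sumr sum_Q sum_out_law subrr.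
Qed.

Lemma joint_law_ge0 s : 0 <= joint_law s.
Proof. exact: mulr_ge0. Qed.

Lemma sum_joint_law : \sum_s joint_law s = 1.
Proof.
rewrite -(pair_bigA _ (fun x y => p x * Q x y)) /= -sum_p.
by apply: eq_bigr => x _; rewrite -mulr_sumr sum_Q mulr1.
Qed.

Lemma mean_joint_law_dist : \sum_s joint_law s * d s.1 s.2 = mean_dist.
Proof. by rewrite -(pair_bigA _ (fun x y => p x * Q x y * d x y)). Qed.

Lemma mean_joint_law_info : \sum_s joint_law s * info_dens s.1 s.2 = mutual_info.
Proof. by rewrite -(pair_bigA _ (fun x y => p x * Q x y * info_dens x y)). Qed.

End TestChannel.

Lemma expRN_mul_le (R : realType) (K b : R) : 0 <= K -> 0 <= b <= 1 ->
  expR (- (K * b)) <= 2 * (1 - b) + expR (- (K / 2)).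
Proof.
move=> K_ge0 /andP[b_ge0 b_le1]; have := expR_ge0 (- (K / 2)).
have [b_half|b_half] := leP (1 / 2) b.
  suff : expR (- (K * b)) <= expR (- (K / 2)) by lra.
  by rewrite ler_expR lerN2 ler_wpM2l // -[2^-1]mul1r.
suff : expR (- (K * b)) <= 1 by lra.
by rewrite expR_le1 oppr_le0 mulr_ge0.
Qed.

Section BlockCode.
Variables (R : realType) (TX TXh : finType).
Variables (p : TX -> R) (Q : TX -> TXh -> R) (d : TX -> TXh -> R).
Hypotheses (p_ge0 : forall x, 0 <= p x) (sum_p : \sum_x p x = 1).
Hypotheses (Q_ge0 : forall x y, 0 <= Q x y) (sum_Q : forall x, \sum_y Q x y = 1).
Hypothesis d_ge0 : forall x y, 0 <= d x y.
Variable n : nat.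
Hypothesis n_gt0 : (0 < n)%N.

Local Notation word := {ffun 'I_n -> TX}.
Local Notation rword := {ffun 'I_n -> TXh}.
Local Notation q := (out_law p Q).
Let q_ge0 : forall y, 0 <= q y := out_law_ge0 p_ge0 Q_ge0.
Let sum_q : \sum_y q y = 1 := sum_out_law sum_p sum_Q.

Definition prod_chan (x : word) (y : rword) := \prod_i Q (x i) (y i).
Definition block_dist (x : word) (y : rword) := n%:R^-1 * \sum_i d (x i) (y i).

Lemma prod_chan_ge0 x y : 0 <= prod_chan x y.
Proof. by apply: prodr_ge0 => i _. Qed.

Lemma sum_prod_chan x : \sum_y prod_chan x y = 1.
Proof. by rewrite /prod_chan -(bigA_distr_bigA (fun i => Q (x i))); apply: big1. Qed.

Lemma block_dist_le_total x y : block_dist x y <= dist_total d.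
Proof.
rewrite /block_dist ler_pdivrMl ?ltr0n // mulr_natl -[n in _ *+ n]card_ord.
by rewrite -sumr_const; apply: ler_sum => i _; apply: dist_le_total.
Qed.

Lemma sum_prodw_prod_chan (G : {ffun 'I_n -> TX * TXh} -> R) :
  \sum_x \sum_y prodw p x * prod_chan x y * G [ffun i => (x i, y i)] =
  \sum_z prodw (joint_law p Q) z * G z.
Proof.
pose zip_ffun (u : word * rword) : {ffun 'I_n -> TX * TXh} := [ffun i => (u.1 i, u.2 i)].
have zip_bij : bijective zip_ffun.
  exists (fun z : {ffun 'I_n -> TX * TXh} =>
    ([ffun i => (z i).1] : word, [ffun i => (z i).2] : rword)).
    by case=> x y; congr pair; apply/ffunP => i; rewrite !ffunE.
  by move=> z; apply/ffunP => i; rewrite !ffunE; case: (z i).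
rewrite pair_bigA [RHS](reindex zip_ffun) /=; last exact: onW_bij.
apply: eq_bigr => -[x y] _; congr (_ * _).
by rewrite /prodw /prod_chan -big_split; apply: eq_bigr => i _; rewrite ffunE.
Qed.

Section Codebook.
Variables (M : nat) (j0 : 'I_M) (thr : R).
Hypothesis thr_ge0 : 0 <= thr.
Local Notation codebook := {ffun 'I_M -> rword}.

Definition min_dist_enc (c : codebook) (x : word) : 'I_M :=
  Order.arg_min j0 xpredT (fun j => block_dist x (c j)).

Lemma min_dist_encP (c : codebook) x j :
  block_dist x (c (min_dist_enc c x)) <= block_dist x (c j).
Proof.
rewrite /min_dist_enc.
case: (Order.TotalTheory.arg_minP (fun j => block_dist x (c j)) (isT : xpredT j0)).
by move=> i _; apply.
Qed.

Lemma min_dist_enc_le (c : codebook) x : block_dist x (c (min_dist_enc c x)) <=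
  thr + dist_total d * \prod_j (if block_dist x (c j) <= thr then 0 else 1).
Proof.
have [/existsP[j dist_j]|/existsPn miss] := boolP [exists j, block_dist x (c j) <= thr].
  rewrite (bigD1 j) //= dist_j mul0r mulr0 addr0.
  exact: le_trans (min_dist_encP c x j) dist_j.
rewrite big1 ?mulr1 => [|j _]; last by rewrite (negPf (miss j)).
by apply: le_trans (block_dist_le_total _ _) _; rewrite lerDr.
Qed.

Definition cover_prob x := \sum_y prodw q y * (if block_dist x y <= thr then 1 else 0).

Lemma sum_codebook_miss x :
  \sum_(c : codebook) prodw (prodw q) c * \prod_j (if block_dist x (c j) <= thr then 0 else 1)
  = (1 - cover_prob x) ^+ M.
Proof.
rewrite (sum_prodwM _ (fun _ y => if block_dist x y <= thr then 0 else 1)).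
rewrite prodr_const card_ord; congr (_ ^+ _).
rewrite -[in RHS](sum_prodw sum_q n) -sumrB.
by apply: eq_bigr => y _; case: ifP; rewrite ?mulr0 ?mulr1 ?subrr ?subr0.
Qed.

Lemma avg_min_dist_enc_le :
  \sum_(c : codebook) prodw (prodw q) c *
    \sum_x prodw p x * block_dist x (c (min_dist_enc c x))
  <= thr + dist_total d * \sum_x prodw p x * (1 - cover_prob x) ^+ M.
Proof.
apply: le_trans (_ : \sum_(c : codebook) prodw (prodw q) c * \sum_x prodw p x *
   (thr + dist_total d * \prod_j (if block_dist x (c j) <= thr then 0 else 1)) <= _).
  apply: ler_sum => c _; apply: (ler_wpM2l (prodw_ge0 (prodw_ge0 q_ge0) c)).
  by apply: ler_sum => x _; apply: (ler_wpM2l (prodw_ge0 p_ge0 x)); apply: min_dist_enc_le.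
rewrite le_eqVlt; apply/orP; left; apply/eqP.
under eq_bigr do rewrite mulr_sumr; rewrite exchange_big /=.
transitivity (\sum_x prodw p x * (thr + dist_total d * (1 - cover_prob x) ^+ M)).
  apply: eq_bigr => x _; rewrite -[thr in RHS]mulr1 -sum_codebook_miss.
  rewrite -[X in thr * X](sum_prodw (sum_prodw sum_q n) M).
  by rewrite !mulr_sumr -big_split mulr_sumr; apply: eq_bigr => c _ /=; ring.
rewrite -[thr in RHS]mulr1 -[X in thr * X](sum_prodw sum_p n).
by rewrite !mulr_sumr -big_split; apply: eq_bigr => x _ /=; ring.
Qed.

Lemma cover_prob_le1 x : cover_prob x <= 1.
Proof.
rewrite -(sum_prodw sum_q n); apply: ler_sum => y _.
by rewrite -[X in _ <= X]mulr1 ler_wpM2l ?prodw_ge0 //; case: ifP.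
Qed.

Variable cI : R.

Definition typical x (y : rword) :=
  (block_dist x y <= thr) && (\sum_i info_dens p Q (x i) (y i) <= cI).
Definition typical_prob x := \sum_y prod_chan x y * (if typical x y then 1 else 0).

Lemma typical_prob_ge0 x : 0 <= typical_prob x.
Proof. by apply: sumr_ge0 => y _; rewrite mulr_ge0 ?prod_chan_ge0 //; case: ifP. Qed.

Lemma typical_prob_le1 x : typical_prob x <= 1.
Proof.
rewrite -(sum_prod_chan x); apply: ler_sum => y _.
by rewrite -[X in _ <= X]mulr1 ler_wpM2l ?prod_chan_ge0 //; case: ifP.
Qed.

Lemma prod_chan_le x (y : rword) : 0 < prodw p x -> \sum_i info_dens p Q (x i) (y i) <= cI ->
  expR (- cI) * prod_chan x y <= prodw q y.
Proof.
move=> px_gt0 info_le.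
have [->|chan_neq0] := eqVneq (prod_chan x y) 0; first by rewrite mulr0 prodw_ge0.
have Q_gt0 i : 0 < Q (x i) (y i).
  by rewrite lt_def Q_ge0 andbT; move/prodf_neq0: chan_neq0; apply.
have p_gt0 i : 0 < p (x i).
  by rewrite lt_def p_ge0 andbT; move/prodf_neq0: (lt0r_neq0 px_gt0); apply.
have q_gt0 i : 0 < q (y i).
  by apply: lt_le_trans (out_law_ge p_ge0 Q_ge0 (x i) _); rewrite mulr_gt0.
have -> : prod_chan x y = prodw q y * expR (\sum_i info_dens p Q (x i) (y i)).
  rewrite expR_sum /prodw /prod_chan -big_split /=; apply: eq_bigr => i _.
  by rewrite /info_dens lnK ?posrE ?divr_gt0 // mulrCA mulfV ?gt_eqF ?mulr1.
rewrite mulrCA -[X in _ <= X]mulr1 ler_wpM2l ?prodw_ge0 //.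
by rewrite -expRD expR_le1 addrC subr_le0.
Qed.

Lemma cover_prob_ge x : 0 < prodw p x -> expR (- cI) * typical_prob x <= cover_prob x.
Proof.
move=> px_gt0; rewrite /typical_prob mulr_sumr; apply: ler_sum => y _.
rewrite /typical; case: (boolP (block_dist x y <= thr)) => dist_ok /=; last first.
  by rewrite !mulr0.
case: (boolP (\sum_i _ <= cI)) => info_ok; rewrite ?mulr0 ?mulr1 ?mulr_ge0 ?prodw_ge0 //.
exact: prod_chan_le.
Qed.

Lemma miss_prob_le x : prodw p x * (1 - cover_prob x) ^+ M <=
  prodw p x * (2 * (1 - typical_prob x) + expR (- (M%:R * expR (- cI) / 2))).
Proof.
have [->|px_neq0] := eqVneq (prodw p x) 0; first by rewrite !mul0r.
have px_gt0 : 0 < prodw p x by rewrite lt_def px_neq0 prodw_ge0.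
rewrite ler_wpM2l ?prodw_ge0 //.
apply: (@le_trans _ _ (expR (- cover_prob x) ^+ M)).
  rewrite lerXn2r ?nnegrE ?subr_ge0 ?cover_prob_le1 ?expR_ge0 //.
  exact: expR_ge1Dx.
rewrite -expRM_natr; apply: le_trans (expRN_mul_le _ _); last first.
- by rewrite typical_prob_ge0 typical_prob_le1.
- by rewrite mulr_ge0 ?expR_ge0.
rewrite ler_expR mulNr lerN2.
by rewrite -mulrA [X in _ <= X]mulrC ler_wpM2l ?cover_prob_ge.
Qed.

Variable de : R.
Hypotheses (de_gt0 : 0 < de) (thrE : thr = mean_dist p Q d + de).
Hypothesis cIE : cI = n%:R * (mutual_info p Q + de).

Lemma atypical_le_dev x (y : rword) :
  1 - (if typical x y then 1 else 0) <=
  (if n%:R * de < `|\sum_i d (x i) (y i) - n%:R * mean_dist p Q d| then 1 else 0 : R) +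
  (if n%:R * de < `|\sum_i info_dens p Q (x i) (y i) - n%:R * mutual_info p Q|
   then 1 else 0).
Proof.
have ind_ge0 (b : bool) : (0 : R) <= (if b then 1 else 0) by case: b.
rewrite /typical; case: (boolP (block_dist x y <= thr)) => [dist_ok|]; last first.
  rewrite -ltNge /block_dist ltr_pdivlMl ?ltr0n // thrE mulrDr => dist_big.
  suff -> : n%:R * de < `|\sum_i d (x i) (y i) - n%:R * mean_dist p Q d|.
    by rewrite subr0 lerDl.
  by apply: lt_le_trans (ler_norm _); lra.
case: (boolP (\sum_i _ <= cI)) => [_|]; first by rewrite subrr addr_ge0.
rewrite -ltNge cIE mulrDr => info_big.
suff -> : n%:R * de < `|\sum_i info_dens p Q (x i) (y i) - n%:R * mutual_info p Q|.
  by rewrite subr0 lerDr.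
by apply: lt_le_trans (ler_norm _); lra.
Qed.

Lemma atypical_prob_le :
  \sum_x prodw p x * (1 - typical_prob x) <=
  (dist_var p Q d + info_var p Q) / (n%:R * de ^+ 2).
Proof.
pose dev (Z : TX * TXh -> R) mu (z : {ffun 'I_n -> TX * TXh}) : R :=
  if n%:R * de < `|\sum_i Z (z i) - n%:R * mu| then 1 else 0.
have cheb Z mu : \sum_s joint_law p Q s * Z s = mu ->
    \sum_z prodw (joint_law p Q) z * dev Z mu z <=
    (\sum_s joint_law p Q s * (Z s - mu) ^+ 2) / (n%:R * de ^+ 2).
  move=> <-; apply: chebyshev_prodw => //; first exact: joint_law_ge0.
  exact: sum_joint_law.
rewrite mulrDl; apply: le_trans (lerD (cheb _ _ (mean_joint_law_dist p Q d))
                                      (cheb _ _ (mean_joint_law_info p Q))).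
rewrite -!sum_prodw_prod_chan -big_split; apply: ler_sum => x _ /=.
rewrite -(sum_prod_chan x) /typical_prob -sumrB mulr_sumr -big_split.
apply: ler_sum => y _ /=; rewrite -mulrDr -mulrA ler_wpM2l ?prodw_ge0 //.
rewrite -[X in X - _]mulr1 -mulrBr ler_wpM2l ?prod_chan_ge0 //.
have zipE (Z : TX * TXh -> R) : \sum_i Z ([ffun i => (x i, y i)] i) = \sum_i Z (x i, y i).
  by apply: eq_bigr => i _; rewrite ffunE.
rewrite /dev (zipE (fun s => d s.1 s.2)) (zipE (fun s => info_dens p Q s.1 s.2)).
exact: atypical_le_dev.
Qed.

Lemma avg_min_dist_enc_typical_le :
  \sum_(c : codebook) prodw (prodw q) c *
    \sum_x prodw p x * block_dist x (c (min_dist_enc c x))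
  <= thr + dist_total d * (2 * ((dist_var p Q d + info_var p Q) / (n%:R * de ^+ 2)) +
                           expR (- (M%:R * expR (- cI) / 2))).
Proof.
apply: le_trans avg_min_dist_enc_le _.
rewrite lerD2l ler_wpM2l ?dist_total_ge0 //.
apply: le_trans (ler_sum _ (fun x _ => miss_prob_le x)) _.
under eq_bigr do rewrite mulrDr mulrCA.
rewrite big_split /= -mulr_sumr -mulr_suml (sum_prodw sum_p n) mul1r lerD2r.
by rewrite ler_wpM2l ?atypical_prob_le.
Qed.

End Codebook.
End BlockCode.

Lemma truncn_expR_gt0 (R : realType) (a : R) : 0 <= a -> (0 < Num.truncn (expR a))%N.
Proof. by move=> a_ge0; rewrite truncn_gt0 -expR0 ler_expR. Qed.

Lemma ln_truncn_expR_le (R : realType) (a : R) : 0 <= a -> ln (Num.truncn (expR a))%:R <= a.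
Proof.
move=> a_ge0; have /andP[trunc_le _] := truncn_itv (expR_ge0 a).
by rewrite -[X in _ <= X]expRK ler_ln ?posrE ?expR_gt0 ?ltr0n ?truncn_expR_gt0.
Qed.

Lemma truncn_expR_mulN_ge (R : realType) (a b : R) : 0 <= b ->
  a - b <= (Num.truncn (expR a))%:R * expR (- b).
Proof.
move=> b_ge0; have /andP[_ lt_trunc] := truncn_itv (expR_ge0 a).
have trunc_ge : expR a - 1 <= (Num.truncn (expR a))%:R.
  by move: lt_trunc; rewrite -natr1 => lt_trunc; lra.
apply: le_trans (ler_wpM2r (expR_ge0 (- b)) trunc_ge).
rewrite mulrBl mul1r -expRD.
have : expR (- b) <= 1 by rewrite expR_le1 oppr_le0.
by have := expR_ge1Dx (a - b); lra.
Qed.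

Lemma expRN_half_le (R : realType) (K : R) : 0 < K -> expR (- (K / 2)) <= 2 / K.
Proof.
move=> K_gt0; rewrite expRN -[2 / K]invf_div lef_pV2 ?posrE ?expR_gt0 ?divr_gt0 //.
by apply: le_trans (expR_ge1Dx _); rewrite lerDr.
Qed.

Section RandomCoding.
Variables (R : realType) (TX TXh : finType).
Variables (p : TX -> R) (Q : TX -> TXh -> R) (d : TX -> TXh -> R).
Hypotheses (p_ge0 : forall x, 0 <= p x) (sum_p : \sum_x p x = 1).
Hypotheses (Q_ge0 : forall x y, 0 <= Q x y) (sum_Q : forall x, \sum_y Q x y = 1).
Hypothesis d_ge0 : forall x y, 0 <= d x y.

Local Notation I := (mutual_info p Q).
Local Notation var_sum := (dist_var p Q d + info_var p Q).

Lemma exists_code_avg_le n Rs de : (0 < n)%N -> 0 < de -> I + 2 * de <= Rs ->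
  let M := Num.truncn (expR (n%:R * Rs)) in
  exists (c : {ffun 'I_M -> {ffun 'I_n -> TXh}}) (e : {ffun 'I_n -> TX} -> 'I_M),
    \sum_x prodw p x * block_dist d x (c (e x)) <=
    mean_dist p Q d + de + dist_total d * (2 * var_sum / de ^+ 2 + 2 / de) / n%:R.
Proof.
move=> n_gt0 de_gt0 Rs_ge M.
have I_ge0 : 0 <= I := mutual_info_ge0 p_ge0 sum_p Q_ge0 sum_Q.
have n_pos : 0 < n%:R :> R by rewrite ltr0n.
have M_gt0 : (0 < M)%N by rewrite truncn_expR_gt0 // mulr_ge0 //; lra.
pose j0 := Ordinal M_gt0; pose cI := n%:R * (I + de).
have thr_ge0 : 0 <= mean_dist p Q d + de.
  by rewrite addr_ge0 ?(ltW de_gt0) ?(mean_dist_ge0 p_ge0 Q_ge0 d_ge0).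
have avg := avg_min_dist_enc_typical_le p_ge0 sum_p Q_ge0 sum_Q d_ge0 n_gt0 j0
  thr_ge0 de_gt0 erefl (erefl cI).
have [c c_le] := exists_le_avg
  (fun c : {ffun 'I_M -> {ffun 'I_n -> TXh}} =>
     \sum_x prodw p x * block_dist d x (c (min_dist_enc d j0 c x)))
  (prodw_ge0 (prodw_ge0 (out_law_ge0 p_ge0 Q_ge0)))
  (sum_prodw (sum_prodw (sum_out_law sum_p sum_Q) n) M).
exists c, (min_dist_enc d j0 c); apply: le_trans c_le (le_trans avg _).
have K_ge : n%:R * de <= M%:R * expR (- cI).
  apply: le_trans (truncn_expR_mulN_ge _ _); last by rewrite mulr_ge0 //; lra.
  by rewrite -mulrBr ler_wpM2l //; lra.
have exp_le : expR (- (M%:R * expR (- cI) / 2)) <= 2 / (n%:R * de).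
  apply: le_trans (expRN_half_le (lt_le_trans _ K_ge)) _; first by rewrite mulr_gt0.
  rewrite ler_pdivrMr ?(lt_le_trans _ K_ge) ?mulr_gt0 // mulrAC.
  by rewrite ler_pdivlMr ?mulr_gt0 // ler_wpM2l.
have -> : dist_total d * (2 * var_sum / de ^+ 2 + 2 / de) / n%:R =
          dist_total d * (2 * (var_sum / (n%:R * de ^+ 2)) + 2 / (n%:R * de)).
  by field; rewrite gt_eqF ?lt0r_neq0.
by rewrite lerD2l; apply: (ler_wpM2l (dist_total_ge0 d_ge0)); rewrite lerD2l.
Qed.

Theorem rate_distortion_code (Rs eps : R) : I < Rs -> 0 < eps ->
  exists n M (c : {ffun 'I_M -> {ffun 'I_n -> TXh}}) (e : {ffun 'I_n -> TX} -> 'I_M),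
    [/\ (0 < n)%N, ln M%:R / n%:R <= Rs &
        \sum_x prodw p x * block_dist d x (c (e x)) <= mean_dist p Q d + eps].
Proof.
move=> I_lt eps_gt0.
have I_ge0 : 0 <= I := mutual_info_ge0 p_ge0 sum_p Q_ge0 sum_Q.
pose de := Num.min (eps / 2) ((Rs - I) / 2).
have de_gt0 : 0 < de by rewrite lt_min !divr_gt0 // subr_gt0.
have de_le_eps : de <= eps / 2 by rewrite ge_min lexx.
have Rs_ge : I + 2 * de <= Rs.
  have : de <= (Rs - I) / 2 by rewrite ge_min lexx orbT.
  lra.
pose C := dist_total d * (2 * var_sum / de ^+ 2 + 2 / de).
have var_ge0 : 0 <= var_sum.
  by rewrite addr_ge0 // sumr_ge0 // => s _;
    rewrite mulr_ge0 ?sqr_ge0 ?(joint_law_ge0 p_ge0 Q_ge0).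
have C_ge0 : 0 <= C.
  by rewrite mulr_ge0 ?(dist_total_ge0 d_ge0) //
    addr_ge0 ?divr_ge0 ?mulr_ge0 ?sqr_ge0 ?(ltW de_gt0).
pose n := (Num.truncn (C / de)).+1.
have n_pos : 0 < n%:R :> R by rewrite ltr0n.
have C_lt : C / n%:R < de.
  have /andP[_ lt_n] := truncn_itv (divr_ge0 C_ge0 (ltW de_gt0)).
  by rewrite ltr_pdivrMr // mulrC -ltr_pdivrMr.
have [c [e avg]] := exists_code_avg_le (isT : (0 < n)%N) de_gt0 Rs_ge.
exists n, _, c, e; split => //.
  by rewrite ler_pdivrMr // mulrC ln_truncn_expR_le // mulr_ge0 //; lra.
by apply: le_trans avg _; rewrite -/C; lra.
Qed.

End RandomCoding.

(** * Sublinear expectations of functions of finitely many letters *)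

Section FfunRcons.
Variables (R : realType) (S : finType).

Definition ffun_rcons n (g : {ffun 'I_n -> S}) (y : S) : {ffun 'I_n.+1 -> S} :=
  [ffun i => if unlift ord_max i is Some j then g j else y].

Lemma ffun_rcons_max n (g : {ffun 'I_n -> S}) y : ffun_rcons g y ord_max = y.
Proof. by rewrite ffunE unlift_none. Qed.

Lemma ffun_rcons_lift n (g : {ffun 'I_n -> S}) y j : ffun_rcons g y (lift ord_max j) = g j.
Proof. by rewrite ffunE liftK. Qed.

Lemma sum_ffun_rcons n (G : {ffun 'I_n.+1 -> S} -> R) :
  \sum_f G f = \sum_g \sum_y G (ffun_rcons g y).
Proof.
pose split_last (f : {ffun 'I_n.+1 -> S}) := ([ffun j => f (lift ord_max j)], f ord_max).
have rcons_bij : bijective (fun u : {ffun 'I_n -> S} * S => ffun_rcons u.1 u.2).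
  exists split_last => [[g y]|f]; rewrite /split_last /=.
    by rewrite ffun_rcons_max; congr pair; apply/ffunP => j; rewrite ffunE ffun_rcons_lift.
  by apply/ffunP => i; rewrite ffunE; case: unliftP => [j ->|->]; rewrite ?ffunE.
by rewrite pair_bigA (reindex _ (onW_bij _ rcons_bij)).
Qed.

Lemma prodw_rcons (r : S -> R) n (g : {ffun 'I_n -> S}) y :
  prodw r (ffun_rcons g y) = prodw r g * r y.
Proof.
rewrite /prodw big_ord_recr /= ffun_rcons_max; congr (_ * _).
apply: eq_bigr => i _; rewrite -[g i](ffun_rcons_lift g y); congr (r (ffun_rcons g y _)).
by apply/val_inj; rewrite /= /bump leqNgt ltn_ord.
Qed.

End FfunRcons.

Local Open Scope classical_set_scope.

Section FiniteValued.
Variables (R : realType) (dd : measure_display) (Omega : measurableType dd).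
Variables (mu : probability Omega R) (T : finType) (V : Omega -> T).
Hypothesis mV : forall t, measurable (V @^-1` [set t]).

Lemma integral_fin_valued (psi : T -> R) :
  (\int[mu]_w (psi (V w))%:E = (\sum_t psi t * fine (mu (V @^-1` [set t])))%:E)%E.
Proof.
have -> : (fun w => (psi (V w))%:E) =
    (fun w => \sum_t (psi t)%:E * (\1_(V @^-1` [set t]) w)%:E)%E.
  apply/funext => w; rewrite (bigD1 (V w)) //= big1 => [|t /negPf tV].
    by rewrite indicE mem_set //= mule1 adde0.
  by rewrite indicE memNset ?mule0 //= => Vt; rewrite Vt eqxx in tV.
rewrite integral_sum // => [|t]; last exact/integrableZl/integrable_indic.
rewrite -sumEFin; apply: eq_bigr => t _.
rewrite integralZl ?integral_indic ?setIT ?EFinM ?fineK ?fin_num_measure //.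
exact: integrable_indic.
Qed.

Lemma fiber_prob_ge0 t : 0 <= fine (mu (V @^-1` [set t])).
Proof. exact/fine_ge0/measure_ge0. Qed.

Lemma sum_fiber_prob : \sum_t fine (mu (V @^-1` [set t])) = 1.
Proof.
apply/EFin_inj; have := integral_fin_valued (fun _ => 1).
under eq_bigr do rewrite mul1r; move=> <-.
by rewrite integral_cst // mul1e; apply: probability_setT.
Qed.

Lemma le_integral_fin_valued (psi phi : T -> R) : (forall t, psi t <= phi t) ->
  (\int[mu]_w (psi (V w))%:E <= \int[mu]_w (phi (V w))%:E)%E.
Proof.
move=> psi_le; rewrite !integral_fin_valued lee_fin.
by apply: ler_sum => t _; rewrite ler_wpM2r ?fiber_prob_ge0.
Qed.

Lemma integral_fin_valued_le (psi : T -> R) (B : R) : (forall t, psi t <= B) ->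
  (\int[mu]_w (psi (V w))%:E <= B%:E)%E.
Proof.
move=> psi_le; rewrite integral_fin_valued lee_fin -[B]mulr1 -sum_fiber_prob mulr_sumr.
by apply: ler_sum => t _; rewrite ler_wpM2r ?fiber_prob_ge0.
Qed.

End FiniteValued.

Section Sublinear.
Variables (R : realType) (dd : measure_display) (Omega : measurableType dd).
Variables (Theta : Type) (P : Theta -> probability Omega R).
Variables (TX : finType) (X : nat -> Omega -> TX).
Hypothesis mX : forall i x, measurable (X i @^-1` [set x]).

Definition xvec n w : {ffun 'I_n -> TX} := [ffun i : 'I_n => X i w].

Lemma xvec_Xvec n w : xvec n w = [ffun i => tnth (Xvec X n w) i].
Proof. by apply/ffunP => i; rewrite !ffunE tnth_mktuple. Qed.

Lemma xvecS n w : xvec n.+1 w = ffun_rcons (xvec n w) (X n w).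
Proof.
apply/ffunP => i; rewrite !ffunE.
by case: unliftP => [j ->|->]; rewrite ?ffunE //= /bump leqNgt ltn_ord.
Qed.

Lemma measurable_xvec_fiber n g : measurable (xvec n @^-1` [set g]).
Proof.
rewrite (_ : _ @^-1` _ = \bigcap_(i in [set: 'I_n]) X i @^-1` [set g i]).
  by apply: fin_bigcap_measurable => [|i _]; [exact: finite_finset | exact: mX].
apply/seteqP; split => w /=; first by move=> <- i _; rewrite ffunE.
by move=> Xg; apply/ffunP => i; rewrite ffunE; apply: Xg.
Qed.

Lemma Eth_le_sE th f : (Eth P th f <= sE P f)%E.
Proof. by apply: ereal_sup_ubound; exists th. Qed.

Lemma Eth_xvec th n (F : {ffun 'I_n -> TX} -> R) :
  Eth P th (fun w => F (xvec n w)) =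
  (\sum_g F g * fine (P th (xvec n @^-1` [set g])))%:E.
Proof. by rewrite /Eth (integral_fin_valued (P th) (@measurable_xvec_fiber n)). Qed.

Lemma le_sE_xvec n (F G : {ffun 'I_n -> TX} -> R) : (forall g, F g <= G g) ->
  (sE P (fun w => F (xvec n w)) <= sE P (fun w => G (xvec n w)))%E.
Proof.
move=> FG; apply: ge_ereal_sup => _ [th _ <-]; apply: le_trans (Eth_le_sE th _).
exact: le_integral_fin_valued (@measurable_xvec_fiber n) _ _ FG.
Qed.

Lemma lE_xvecE n (F : {ffun 'I_n -> TX} -> R) :
  lE P (fun w => F (xvec n w)) = (- sE P (fun w => (- F (xvec n w))%R))%E.
Proof.
rewrite /lE ereal_infEN; congr (- ereal_sup _)%E.
have EthN th :
    Eth P th (fun w => - F (xvec n w)) = (- Eth P th (fun w => F (xvec n w)))%E.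
  rewrite (Eth_xvec th (fun g => - F g)) Eth_xvec -EFinN -sumrN.
  by congr _%:E; apply: eq_bigr => g _; rewrite mulNr.
apply/seteqP; split => z /=.
  by move=> [_ [th _ <-] <-]; exists th; rewrite ?EthN.
by move=> [th _ <-]; exists (Eth P th (fun w => F (xvec n w))); [exists th | rewrite EthN].
Qed.

Variable th0 : Theta.
Hypothesis iid : iid_seq P X.
Local Notation p := (pth P X th0).

Lemma sum_pth_le_sE (psi : TX -> R) i :
  \sum_y psi y * p y <= fine (sE P (fun w => psi (X i w))).
Proof.
have lb : ((\sum_y psi y * p y)%:E <= sE P (fun w => psi (X i w)))%E.
  rewrite (iid.1 i 0 psi) -(integral_fin_valued _ (mX 0)).
  exact: Eth_le_sE th0 _.
have ub : (sE P (fun w => psi (X i w)) <= (\sum_y `|psi y|)%:E)%E.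
  apply: ge_ereal_sup => _ [th _ <-]; apply: (integral_fin_valued_le _ (mX i)) => y.
  rewrite (bigD1 y) //= (le_trans (ler_norm _)) // lerDl.
  by apply: sumr_ge0 => *.
have sE_fin : sE P (fun w => psi (X i w)) \is a fin_num.
  by rewrite fin_numElt (lt_le_trans _ lb) ?ltNyr // (le_lt_trans ub) ?ltry.
by rewrite -lee_fin fineK.
Qed.

Lemma sE_ge_prodw n (F : {ffun 'I_n -> TX} -> R) :
  ((\sum_g prodw p g * F g)%:E <= sE P (fun w => F (xvec n w)))%E.
Proof.
elim: n F => [|n IHn] F.
  have fiber0 (g : {ffun 'I_0 -> TX}) : xvec 0 @^-1` [set g] = setT.
    by apply/seteqP; split => w // _; apply/ffunP => -[].
  apply: le_trans (Eth_le_sE th0 _); rewrite Eth_xvec lee_fin; apply: ler_sum => g _.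
  by rewrite fiber0 (@probability_setT _ _ _ (P th0)) /prodw big_ord0 mul1r mulr1.
pose G g := \sum_y p y * F (ffun_rcons g y).
have -> : \sum_g prodw p g * F g = \sum_g prodw p g * G g.
  rewrite sum_ffun_rcons; apply: eq_bigr => g _.
  by rewrite /G mulr_sumr; apply: eq_bigr => y _; rewrite prodw_rcons mulrA.
apply: le_trans (IHn G) _.
pose phi (t : n.-tuple TX) y := F (ffun_rcons [ffun i => tnth t i] y).
have -> : (fun w => F (xvec n.+1 w)) = (fun w => phi (Xvec X n w) (X n w)).
  by apply/funext => w; rewrite /phi -xvec_Xvec xvecS.
rewrite iid.2 /phi; under [X in (_ <= sE P X)%E]eq_fun do rewrite -xvec_Xvec.
apply: (@le_sE_xvec n G (fun g => fine (sE P (fun w => F (ffun_rcons g (X n w)))))) => g.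
rewrite /G; under eq_bigr do rewrite mulrC.
exact: sum_pth_le_sE (fun y => F (ffun_rcons g y)) n.
Qed.

Lemma lE_le_prodw n (F : {ffun 'I_n -> TX} -> R) :
  (lE P (fun w => F (xvec n w)) <= (\sum_g prodw p g * F g)%:E)%E.
Proof.
rewrite lE_xvecE leeNl -EFinN; apply: le_trans (sE_ge_prodw (fun g => - F g)).
by rewrite lee_fin -sumrN; under eq_bigr do rewrite -mulrN.
Qed.

End Sublinear.

Theorem theorem14 (R : realType) (dd : measure_display) (Omega : measurableType dd)
  (Theta : Type) (P : Theta -> probability Omega R)
  (TX TXh : finType) (X : nat -> Omega -> TX) (d : TX -> TXh -> R) :
  (exists th : Theta, True) ->
  (forall (i : nat) (x : TX), measurable (X i @^-1` [set x])) ->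
  weakly_compact P X ->
  iid_seq P X ->
  (forall x y, 0 <= d x y) ->
  forall D Rs eps : R, (RI P X d D < Rs%:E)%E -> 0 < eps ->
  exists (n M : nat) (f : n.-tuple TX -> 'I_M) (g : 'I_M -> n.-tuple TXh),
    [/\ (0 < n)%N, ln (M%:R) / n%:R <= Rs &
      (lE P (fun w => dn d (Xvec X n w) (g (f (Xvec X n w)))) <= (D + eps)%:E)%E].
Proof.
(* Achievability only needs one law of the family: weak compactness is unused. *)
move=> [th0 _] mX _ iid d_ge0 D Rs eps RI_lt eps_gt0.
have [_ [Q [[Q_ge0 sum_Q] EQd_le] <-] Ibar_lt] := ereal_inf_lt RI_lt.
pose p := pth P X th0.
have p_ge0 x : 0 <= p x by apply: fiber_prob_ge0.
have sum_p : \sum_x p x = 1 by apply: sum_fiber_prob (mX 0).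
have I_lt : mutual_info p Q < Rs.
  by rewrite -lte_fin; apply: le_lt_trans Ibar_lt; apply: ereal_sup_ubound; exists th0.
have dist_le : mean_dist p Q d <= D.
  by rewrite -lee_fin; apply: le_trans EQd_le; apply: ereal_sup_ubound; exists th0.
have [n [M [c [e [n_gt0 rate avg]]]]] :=
  rate_distortion_code p_ge0 sum_p Q_ge0 sum_Q d_ge0 I_lt eps_gt0.
exists n, M, (fun t => e [ffun i => tnth t i]), (fun j => [tuple c j i | i < n]).
split => //.
have -> : (fun w => dn d (Xvec X n w) [tuple c (e [ffun i => tnth (Xvec X n w) i]) i | i < n])
    = (fun w => block_dist d (xvec X n w) (c (e (xvec X n w)))).
  apply/funext => w; rewrite -xvec_Xvec /dn /block_dist; congr (_ * _).
  by apply: eq_bigr => i _; rewrite !tnth_mktuple ffunE.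
apply: le_trans (lE_le_prodw mX th0 iid (fun x => block_dist d x (c (e x)))) _.
by rewrite lee_fin; apply: le_trans avg _; lra.
Qed.
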